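(* Let $\mathcal{G}'$ be the extended game of an rLTL game and let $\sigma$ be a strategy for Player 0 in $\mathcal{G}'$ such that for every play prefix $\mathtt{p}$ and every $(\sigma,\mathtt{p})$-play $\rho$: (i) $\rho$ contains no bad move of Player 0 after $\mathtt{p}$, and (ii) there is an adaptive strategy $\sigma_\rho$ for Player 0 such that $\rho$ is a $(\sigma_\rho,\mathtt{p}')$-play for some prefix $\mathtt{p}'$ of $\rho$. Then $\sigma$ is adaptive.
   Context: Truth values $\mathbb{B}_4=\{1111,0111,0011,0001,0000\}$, ordered $1111>0111>0011>0001>0000$. An rLTL game $\mathcal{G}=(\mathcal{A},\varphi)$: finite arena $\mathcal{A}=(V,E,\lambda)$, $V=V_0\,\dot\cup\,V_1$, $E\subseteq V\times V$, $\lambda:V\to2^{\mathcal{P}}$, and a robust LTL formula $\varphi$ assigning each $\alpha\in(2^{\mathcal{P}})^\omega$ a value $\mathcal{V}(\alpha,\varphi)\in\mathbb{B}_4$ (rLTL semantics of Tabuada and Neider); the value of a play (infinite path) $\rho$ is $\mathcal{V}(\lambda(\rho),\varphi)$; Player 0 maximizes, Player 1 minimizes. For each $b$ fix a deterministic parity automaton $\mathcal{C}^b=(Q^b,2^{\mathcal{P}},q_0^b,\delta^b,\Omega^b)$ accepting $\{w:\mathcal{V}(w,\varphi)\ge b\}$. The extended game $\mathcal{G}'$ is the rLTL game with vertices $V'=V\times Q^{0000}\times\cdots\times Q^{1111}$ owned as their $V$-component, edges $(v_1,\vec q_1)\to(v_2,\vec q_2)$ iff $(v_1,v_2)\in E$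 and $\delta^b(q_1^b,\lambda(v_1))=q_2^b$ for all $b$, labels $\lambda'(v,\vec q)=\lambda(v)$, and formula $\varphi$. A play prefix is a finite nonempty path; a Player $i$ strategy maps prefixes ending in Player $i$ vertices to successors; for an arbitrary prefix $\mathtt{p}=v_0\cdots v_n$, a $(\sigma,\mathtt{p})$-play is a play $\mathtt{p}v_{n+1}\cdots$ with $v_{k+1}=\sigma(v_0\cdots v_k)$ whenever $k\ge n$ and $v_k$ belongs to the owner of $\sigma$. A Player 0 (resp. Player 1) strategy enforces $b$ from $\mathtt{p}$ if every $(\sigma,\mathtt{p})$-play has value $\ge b$ (resp. $\le b$). A Player 0 strategy $\sigma_0$ is adaptive if for every prefix $\mathtt{p}$ and value $b$, if some Player 0 strategy enforces $b$ from $\mathtt{p}$ then $\sigma_0$ enforces $b$ from $\mathtt{p}$. A play $v_0v_1\cdots$ contains a bad move of Player $i$ at position $j>0$ if Player $i$ can enforce some value $b$ from $v_0\cdots v_{j-1}$ but cannot enforce $b$ from $v_0\cdots v_j$; a bad move after $\mathtt{p}$ is one at a position $j\ge|\mathtt{p}|$. *)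

From mathcomp Require Import all_boot.
From Stdlib Require Import ClassicalEpsilon.

Set Implicit Arguments.
Unset Strict Implicit.
Unset Printing Implicit Defensive.

(* Truth values B4 = {0000 < 0001 < 0011 < 0111 < 1111}, encoded as    *)
(* 'I_5 by the number of 1-bits (0 = 0000, ..., 4 = 1111); the order  *)
(* of B4 is then the order of nat.                                     *)
Definition B4 := 'I_5.
Definition b4top : B4 := ord_max.
Definition b4bot : B4 := ord0.

(* bit k of v, k = 0 is the leftmost (strongest) bit, k = 3 the rightmost *)
Definition bit (v : B4) (k : 'I_4) : bool := (4 <= v + k)%N.

(* the B4 value with the given (monotone) bit vector *)
Definition of_bits (f : 'I_4 -> bool) : B4 := inord (\sum_(k < 4) (f k : nat))%N.

Definition pb (Q : Prop) : bool := if excluded_middle_informative Q then true else false.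

Definition b4min (a b : B4) : B4 := if (a <= b)%N then a else b.
Definition b4max (a b : B4) : B4 := if (a <= b)%N then b else a.

Inductive rltl (P : Type) : Type :=
| RAtom of P
| RNeg of rltl P
| RAnd of rltl P & rltl P
| ROr of rltl P & rltl P
| RImpl of rltl P & rltl P
| RNext of rltl P
| REv of rltl P
| RAlw of rltl P
| RUntil of rltl P & rltl P
| RRelease of rltl P & rltl P.

Definition sfx (P : finType) (w : nat -> {set P}) (i : nat) : nat -> {set P} :=
  fun k => w (i + k)%N.

Fixpoint rval (P : finType) (phi : rltl P) (w : nat -> {set P}) {struct phi} : B4 :=
  match phi with
  | RAtom p => if p \in w 0%N then b4top else b4bot
  | RNeg f => if rval f w == b4top then b4bot else b4top
  | RAnd f g => b4min (rval f w) (rval g w)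
  | ROr f g => b4max (rval f w) (rval g w)
  | RImpl f g => if (rval f w <= rval g w)%N then b4top else rval g w
  | RNext f => rval f (sfx w 1)
  | REv f => of_bits (fun k => pb (exists i, bit (rval f (sfx w i)) k))
  | RAlw f => of_bits (fun k => pb (match nat_of_ord k with
        | 0 => forall i, bit (rval f (sfx w i)) k
        | 1 => exists i, forall j, (i <= j)%N -> bit (rval f (sfx w j)) k
        | 2 => forall i, exists j, (i <= j)%N /\ bit (rval f (sfx w j)) k
        | _ => exists i, bit (rval f (sfx w i)) k
        end))
  | RUntil f g => of_bits (fun k => pb (exists j, bit (rval g (sfx w j)) k /\
        forall i, (i < j)%N -> bit (rval f (sfx w i)) k))
  | RRelease f g => of_bits (fun k => pb (forall j, bit (rval g (sfx w j)) k \/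
        exists i, (i < j)%N /\ bit (rval f (sfx w i)) k))
  end.

(* Arenas and games. Players are booleans: false = Player 0 (maximizer) *)
(* true = Player 1 (minimizer).                                        *)
Record arena (P : finType) := Arena {
  vtx : finType;
  owner : vtx -> bool;
  edge : rel vtx;
  label : vtx -> {set P} }.
Arguments owner {P} a _.
Arguments edge {P} a _ _.
Arguments label {P} a _.

Section Games.
Variables (P : finType) (A : arena P) (phi : rltl P).

Definition is_prefix (p : seq (vtx A)) : bool :=
  if p is x :: s then path (edge A) x s else false.

Definition is_play (rho : nat -> vtx A) : Prop := forall k, edge A (rho k) (rho k.+1).

Definition play_val (rho : nat -> vtx A) : B4 := rval phi (fun k => label A (rho k)).

Definition pre (rho : nat -> vtx A) (n : nat) : seq (vtx A) := mkseq rho n.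

Definition is_strategy (i : bool) (sigma : seq (vtx A) -> vtx A) : Prop :=
  forall x s, is_prefix (x :: s) -> owner A (last x s) = i ->
    edge A (last x s) (sigma (x :: s)).

Definition consistent_play (i : bool) (sigma : seq (vtx A) -> vtx A)
    (p : seq (vtx A)) (rho : nat -> vtx A) : Prop :=
  [/\ is_play rho, pre rho (size p) = p &
      forall k, ((size p).-1 <= k)%N -> owner A (rho k) = i ->
        rho k.+1 = sigma (pre rho k.+1)].

Definition enforces (i : bool) (sigma : seq (vtx A) -> vtx A) (b : B4)
    (p : seq (vtx A)) : Prop :=
  forall rho, consistent_play i sigma p rho ->
    if i then (play_val rho <= b)%N else (b <= play_val rho)%N.

Definition can_enforce (i : bool) (b : B4) (p : seq (vtx A)) : Prop :=
  exists sigma, is_strategy i sigma /\ enforces i sigma b p.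

Definition adaptive (sigma : seq (vtx A) -> vtx A) : Prop :=
  forall p, is_prefix p -> forall b, can_enforce false b p -> enforces false sigma b p.

Definition bad_move_at (i : bool) (rho : nat -> vtx A) (j : nat) : Prop :=
  (0 < j)%N /\ exists b, can_enforce i b (pre rho j) /\ ~ can_enforce i b (pre rho j.+1).

Definition no_bad_move_after (i : bool) (p : seq (vtx A)) (rho : nat -> vtx A) : Prop :=
  forall j, (size p <= j)%N -> ~ bad_move_at i rho j.

End Games.

Record dpa (P : finType) := DPA {
  dst : finType;
  dinit : dst;
  ddelta : dst -> {set P} -> dst;
  dprio : dst -> nat }.
Arguments dinit {P} d.
Arguments ddelta {P} d _ _.
Arguments dprio {P} d _.

Fixpoint drun (P : finType) (C : dpa P) (w : nat -> {set P}) (n : nat) : dst C :=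
  match n with
  | 0 => dinit C
  | n'.+1 => ddelta C (drun C w n') (w n')
  end.

Definition accepts (P : finType) (C : dpa P) (w : nat -> {set P}) : Prop :=
  exists m, ~~ odd m /\
    (forall k, exists j, (k <= j)%N /\ dprio C (drun C w j) = m) /\
    (exists k, forall j, (k <= j)%N -> (m <= dprio C (drun C w j))%N).

Definition ext_vtx (P : finType) (A : arena P) (C : B4 -> dpa P) : finType :=
  (vtx A * {dffun forall b : B4, dst (C b)})%type.

Definition ext_arena (P : finType) (A : arena P) (C : B4 -> dpa P) : arena P :=
  @Arena P (ext_vtx A C)
    (fun x => owner A x.1)
    (fun x y => edge A x.1 y.1 &&
                [forall b : B4, y.2 b == ddelta (C b) (x.2 b) (label A x.1)])
    (fun x => label A x.1).

(* Let Player 0 be able to enforce b from p, and let rho be a (sigma, p)-play.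
   Since rho contains no bad move of Player 0 after p, Player 0 can still
   enforce b from every longer prefix of rho.  Past the prefix from which rho
   follows the adaptive strategy sigma_rho, adaptivity of sigma_rho turns this
   into sigma_rho enforcing b on rho itself, so rho has value at least b.
   Nothing about the extended game is used: the argument works in any arena. *)
From mathcomp Require Import all_boot.
From Stdlib Require Import Classical.

Section Plays.
Variables (P : finType) (A : arena P) (phi : rltl P).
Implicit Types (rho : nat -> vtx A) (sigma : seq (vtx A) -> vtx A).

Lemma path_map_iota rho n i :
  is_play rho -> path (edge A) (rho i) (map rho (iota i.+1 n)).
Proof. by move=> play_rho; elim: n i => [|n IHn] i //=; rewrite play_rho IHn. Qed.

Lemma size_pre rho n : size (pre rho n) = n.
Proof. exact: size_mkseq. Qed.

Lemma pre_is_prefix rho n : is_play rho -> (0 < n)%N -> is_prefix (pre rho n).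
Proof. by case: n => [|n] // play_rho _; apply: path_map_iota. Qed.

Lemma consistent_play_pre_mono i sigma rho m n : (m <= n)%N ->
  consistent_play i sigma (pre rho m) rho -> consistent_play i sigma (pre rho n) rho.
Proof.
move=> le_mn [play_rho _ follows]; split=> //; first by rewrite size_pre.
move=> k; rewrite size_pre => le_nk; apply: follows.
by rewrite size_pre (leq_trans _ le_nk) // -!subn1 leq_sub2r.
Qed.

Lemma can_enforce_no_bad_move i b p rho :
  (0 < size p)%N -> pre rho (size p) = p -> no_bad_move_after phi i p rho ->
  can_enforce phi i b p ->
  forall n, (size p <= n)%N -> can_enforce phi i b (pre rho n).
Proof.
move=> p_gt0 rho_p no_bad enf_p n /subnKC <-.
elim: (n - size p) => [|k IHk]; first by rewrite addn0 rho_p.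
rewrite addnS; apply: NNPP => not_enf.
apply: (no_bad (size p + k) (leq_addr _ _)); split.
  by rewrite (leq_trans p_gt0) ?leq_addr.
by exists b.
Qed.

Lemma play_val_ge_of_no_bad_move sigma b p rho m :
  is_prefix p -> pre rho (size p) = p -> is_play rho ->
  no_bad_move_after phi false p rho -> can_enforce phi false b p ->
  adaptive phi sigma -> (0 < m)%N -> consistent_play false sigma (pre rho m) rho ->
  (b <= play_val phi rho)%N.
Proof.
move=> prefix_p rho_p play_rho no_bad enf_p adaptive_sigma m_gt0 rho_sigma.
have p_gt0 : (0 < size p)%N by case: (p) prefix_p.
pose n := maxn m (size p).
have n_gt0 : (0 < n)%N by rewrite (leq_trans m_gt0) ?leq_maxl.
have enf_n : can_enforce phi false b (pre rho n).
  exact: can_enforce_no_bad_move p_gt0 rho_p no_bad enf_p n (leq_maxr _ _).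
apply: (adaptive_sigma _ (pre_is_prefix _ _ play_rho n_gt0) b enf_n).
exact: consistent_play_pre_mono (leq_maxl _ _) rho_sigma.
Qed.

End Plays.

Theorem lemma6 (P : finType) (A : arena P) (phi : rltl P) (C : B4 -> dpa P)
  (HC : forall (b : B4) (w : nat -> {set P}), accepts (C b) w <-> (b <= rval phi w)%N)
  (sigma : seq (vtx (ext_arena A C)) -> vtx (ext_arena A C))
  (Hsigma : is_strategy false sigma)
  (Hgood : forall p, is_prefix p -> forall rho, consistent_play false sigma p rho ->
      no_bad_move_after phi false p rho /\
      exists sigma_rho, [/\ is_strategy false sigma_rho, adaptive phi sigma_rho &
        exists m, (0 < m)%N /\ consistent_play false sigma_rho (pre rho m) rho]) :
  adaptive phi sigma.
Proof.
move=> p prefix_p b enf_p rho rho_sigma.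
have [no_bad [sigma_rho [_ adaptive_rho [m [m_gt0 rho_sigma_rho]]]]] :=
  Hgood p prefix_p rho rho_sigma.
have [play_rho rho_p _] := rho_sigma.
exact: play_val_ge_of_no_bad_move rho_p play_rho no_bad enf_p adaptive_rho
  m_gt0 rho_sigma_rho.
Qed.
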